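(* Let $p>1$ and let $A$ be a real $r$-matrix of order $n_1\times\cdots\times n_r$. Then: (a) $\eta^{(p)}(\mathrm{sym}(A))\leq \dfrac{r!}{r^{r/p}}\|A\|_p$; (b) if $A$ is nonnegative, then $\eta^{(p)}(\mathrm{sym}(A))=\dfrac{r!}{r^{r/p}}\|A\|_p$.
   Context: An $r$-matrix of order $n_1\times\cdots\times n_r$ is a function on $[n_1]\times\cdots\times[n_r]$ with values $a_{i_1,\ldots,i_r}$. Symmetrant: let $n=n_1+\cdots+n_r$, partition $[n]$ into consecutive intervals $N_1,\ldots,N_r$ with $|N_k|=n_k$; for $j\in[n]$ let $\sigma(j)$ be the $k$ with $j\in N_k$ and $\theta(j)$ the position of $j$ within $N_{\sigma(j)}$ (in increasing order). Then $\mathrm{sym}(A)$ is the cubical $r$-matrix $B$ of order $n$ with $b_{j_1,\ldots,j_r}=0$ if $\sigma(j_1),\ldots,\sigma(j_r)$ are not all distinct, and otherwise $b_{j_1,\ldots,j_r}=a_{i_1,\ldots,i_r}$ where $i_{\sigma(j_s)}=\theta(j_s)$ for all $s\in[r]$. For a real symmetric cubical $B$ of order $n$, $P_B(\mathbf{x})=\sum b_{j_1,\ldots,j_r}x_{j_1}\cdots x_{j_r}$ and $\eta^{(p)}(B)=\max\{|P_B(\mathbf{x})|:\mathbf{x}\in\mathbb{R}^n,|\mathbf{x}|_p=1\}$. The spectral $p$-norm is $\|A\|_p=\max\{|\sum a_{i_1,\ldots,i_r}\overline{x^{(1)}_{i_1}}\cdots\overline{x^{(r)}_{i_r}}|:\mathbf{x}^{(k)}\in\mathbb{C}^{n_k},\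 |\mathbf{x}^{(k)}|_p=1\ \forall k\}$. *)

From HB Require Import structures.
From mathcomp Require Import all_boot all_order all_algebra.
From mathcomp Require Import complex.
From mathcomp Require Import boolp classical_sets reals exp.
Set Implicit Arguments. Unset Strict Implicit. Unset Printing Implicit Defensive.
Import Order.TTheory GRing.Theory Num.Theory.
Local Open Scope ring_scope.
Local Open Scope classical_set_scope.

Definition mindex (r : nat) (n : 'I_r -> nat) :=
  {dffun forall k : 'I_r, 'I_(n k)}.

Definition lpnorm (R : realType) (p : R) (I : finType) (x : I -> R) : R :=
  (\sum_(i : I) `|x i| `^ p) `^ p^-1.
Definition lpnormC (R : realType) (p : R) (I : finType) (x : I -> R[i]) : R :=
  (\sum_(i : I) Normc.normc (x i) `^ p) `^ p^-1.

Definition spnorm (R : realType) (p : R) (r : nat) (n : 'I_r -> nat)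
    (A : mindex n -> R) : R :=
  sup [set t : R | exists x : forall k : 'I_r, 'I_(n k) -> R[i],
         (forall k, lpnormC p (x k) = 1) /\
         t = Normc.normc (\sum_(i : mindex n)
                (A i)%:C%C * \prod_(k < r) Num.conj (x k (i k)))].

(* cubical r-matrix of order N: entries b_{j_1..j_r}, j : 'I_r -> 'I_N *)
Definition cform (R : realType) (r N : nat) (B : {ffun 'I_r -> 'I_N} -> R)
    (x : 'I_N -> R) : R :=
  \sum_(j : {ffun 'I_r -> 'I_N}) B j * \prod_(s < r) x (j s).

Definition etaP (R : realType) (p : R) (r N : nat)
    (B : {ffun 'I_r -> 'I_N} -> R) : R :=
  sup [set t : R | exists x : 'I_N -> R, lpnorm p x = 1 /\ t = `|cform B x|].

Definition ntot (r : nat) (n : 'I_r -> nat) : nat := (\sum_(k < r) n k)%N.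
(* first element (0-based) of the interval N_k *)
Definition offs (r : nat) (n : 'I_r -> nat) (k : 'I_r) : nat :=
  (\sum_(l < r | (l < k)%N) n l)%N.
Definition sigma (r : nat) (n : 'I_r -> nat) (j : 'I_(ntot n)) : option 'I_r :=
  [pick k | (offs n k <= j < offs n k + n k)%N].
Definition theta (r : nat) (n : 'I_r -> nat) (j : 'I_(ntot n)) : nat :=
  (j - (if sigma j is Some k then offs n k else 0))%N.

(* b_j = 0 unless the sigma(j_s) are pairwise distinct; otherwise b_j = a_i
   with i_{sigma(j_s)} = theta(j_s) for all s (this i is unique, so the sum
   below has exactly one term). *)
Definition symmetrant (R : realType) (r : nat) (n : 'I_r -> nat) (A : mindex n -> R)
    (j : {ffun 'I_r -> 'I_(ntot n)}) : R :=
  if [forall s : 'I_r, forall t : 'I_r, (s != t) ==> (sigma (j s) != sigma (j t))]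
  then \sum_(i : mindex n |
          [forall s : 'I_r, if sigma (j s) is Some k then
                              (nat_of_ord (i k) == theta (j s)) else false])
         A i
  else 0.

(* The nonzero entries of sym(A) are indexed by the pairs (s, i) of a
   permutation s of [r] and an index i of A, so that
   P_{sym(A)}(x) = r! * A(x|N_1, ..., x|N_r), where x|N_k is the restriction
   of x to the block N_k.  Normalising the blocks bounds |A(y_1, ..., y_r)|
   by ||A||_p * prod_k |y_k|_p, and as sum_k |x|N_k|_p^p <= 1, the AM-GM
   inequality gives prod_k |x|N_k|_p <= r^(-r/p); this is (a).  For a
   nonnegative A the complex vectors in the definition of ||A||_p may be
   replaced by their moduli, and spreading these over the blocks with the
   common weight r^(-1/p) shows that the bound is attained. *)

From HB Require Import structures.
From mathcomp Require Import all_boot all_order all_algebra fingroup perm.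
From mathcomp Require Import complex zify.
From mathcomp Require Import boolp classical_sets reals exp.

Import Order.TTheory GRing.Theory Num.Theory.
Local Open Scope ring_scope.

Section BlockIndices.
Context {r : nat} {n : 'I_r -> nat}.
Local Notation N := (ntot n).

Lemma offsDE (k : 'I_r) : (offs n k + n k = \sum_(l < r | (l <= k)%N) n l)%N.
Proof.
rewrite [RHS](bigD1 k) //= addnC; congr (_ + _)%N.
by apply: eq_bigl => l; rewrite ltn_neqAle andbC.
Qed.

Lemma offs_leq (k k' : 'I_r) : (k < k')%N -> (offs n k + n k <= offs n k')%N.
Proof.
move=> kk'; rewrite offsDE /offs [leqLHS]big_mkcond [leqRHS]big_mkcond.
apply: leq_sum => l _.
by case: ifP => // lk; rewrite (leq_ltn_trans lk kk').
Qed.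

Lemma offsD_leq_ntot (k : 'I_r) : (offs n k + n k <= N)%N.
Proof.
by rewrite offsDE /ntot [leqRHS](bigID (fun l : 'I_r => (l <= k)%N)) leq_addr.
Qed.

Lemma block_index_subproof (k : 'I_r) (m : 'I_(n k)) : (offs n k + m < N)%N.
Proof. by apply: leq_trans (offsD_leq_ntot k); rewrite ltn_add2l. Qed.

Definition block_index (k : 'I_r) (m : 'I_(n k)) : 'I_N :=
  Ordinal (block_index_subproof k m).

Lemma block_index_inj k : injective (@block_index k).
Proof. by move=> m1 m2 /(congr1 val) /= /addnI /val_inj. Qed.

Lemma offs_interval_inj {k k' : 'I_r} {v : nat} :
    (offs n k <= v < offs n k + n k)%N -> (offs n k' <= v < offs n k' + n k')%N ->
  k = k'.
Proof.
move=> /andP[kv vk] /andP[k'v vk']; apply/val_inj.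
by case: (ltngtP k k') => // /offs_leq; lia.
Qed.

Lemma sigmaP (j : 'I_N) (k : 'I_r) :
  sigma j = Some k <-> (offs n k <= j < offs n k + n k)%N.
Proof.
rewrite /sigma; case: pickP => [k' jk'|none].
  by split => [[<-] //| jk]; rewrite (offs_interval_inj jk' jk).
by split => // jk; have := none k; rewrite jk.
Qed.

Lemma sigma_block_index k m : sigma (block_index k m) = Some k.
Proof. by apply/sigmaP; rewrite /= leq_addr /= ltn_add2l. Qed.

Lemma theta_block_index k m : theta (block_index k m) = m.
Proof. by rewrite /theta sigma_block_index /= addKn. Qed.

Lemma sigma_Some_block_index (j : 'I_N) (k : 'I_r) :
  sigma j = Some k -> exists2 m : 'I_(n k), j = block_index k m & m = theta j :> nat.
Proof.
move=> jk; have /andP[kj jk'] := (sigmaP j k).1 jk.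
have mk : (j - offs n k < n k)%N by lia.
by exists (Ordinal mk); [apply/val_inj => /=; lia | rewrite /theta jk].
Qed.

Lemma sum_blocks (V : nmodType) (f : 'I_N -> V) :
    (forall j, sigma j = None -> f j = 0) ->
  \sum_j f j = \sum_k \sum_(m : 'I_(n k)) f (block_index k m).
Proof.
move=> f0; transitivity (\sum_k \sum_(j | sigma j == Some k) f j); last first.
  apply: eq_bigr => k _; rewrite -(big_imset _ (in2W (@block_index_inj k))) /=.
  apply: eq_bigl => j; apply/eqP/imsetP => [/sigma_Some_block_index[m -> _]|[m _ ->]].
    by exists m.
  exact: sigma_block_index.
rewrite (exchange_big_dep xpredT) //=; apply: eq_bigr => j _.
case jk: (sigma j) => [k|]; last by rewrite big_pred0 // f0.
by rewrite (big_pred1 k) // => k'; rewrite eq_sym.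
Qed.

End BlockIndices.

Section SymmetrantForm.
Context {R : realType} {r : nat} {n : 'I_r -> nat}.
Local Notation N := (ntot n).

Definition block (x : 'I_N -> R) (k : 'I_r) (m : 'I_(n k)) : R :=
  x (block_index k m).

Definition multiform (A : mindex n -> R) (y : forall k, 'I_(n k) -> R) : R :=
  \sum_(i : mindex n) A i * \prod_(k < r) y k (i k).

Lemma multiformZ (A : mindex n -> R) (a : R) (y : forall k, 'I_(n k) -> R) :
  multiform A (fun k m => a * y k m) = a ^+ r * multiform A y.
Proof.
rewrite /multiform mulr_sumr; apply: eq_bigr => i _.
by rewrite prodrMl card_ord mulrCA.
Qed.

Definition sym_index (s : {perm 'I_r}) (i : mindex n) : {ffun 'I_r -> 'I_N} :=
  [ffun t => block_index (s t) (i (s t))].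

Lemma sigma_sym_index s i t : sigma (sym_index s i t) = Some (s t).
Proof. by rewrite ffunE sigma_block_index. Qed.

Lemma sym_index_inj : injective (fun si => sym_index si.1 si.2).
Proof.
move=> [s i] [s' i'] /= e.
have es : s = s'.
  apply/permP => t; have := congr1 (fun j : {ffun _} => sigma (j t)) e.
  by rewrite /= !sigma_sym_index => -[].
subst s'; congr pair; apply/ffunP => k.
have := congr1 (fun j : {ffun _} => theta (j (s^-1 k)%g)) e.
by rewrite /= !ffunE !theta_block_index permKV => /val_inj.
Qed.

Lemma symmetrant_sym_index (A : mindex n -> R) s i :
  symmetrant A (sym_index s i) = A i.
Proof.
rewrite /symmetrant.
have -> : [forall t, forall u,
    (t != u) ==> (sigma (sym_index s i t) != sigma (sym_index s i u))].
  apply/forallP => t; apply/forallP => u; apply/implyP => tu.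
  by rewrite !sigma_sym_index; apply: contra tu => /eqP[/perm_inj ->].
rewrite (big_pred1 i) // => i'.
apply/forallP/eqP => [ii'|<- t]; last by rewrite sigma_sym_index ffunE theta_block_index.
apply/ffunP => k; have := ii' (s^-1 k)%g.
by rewrite sigma_sym_index ffunE theta_block_index permKV => /eqP /val_inj.
Qed.

Lemma symmetrant_supp (A : mindex n -> R) j :
  symmetrant A j != 0 -> exists s i, j = sym_index s i.
Proof.
rewrite /symmetrant; case: ifP => [/forallP distinct|]; last by rewrite eqxx.
have [i coord|none] := pickP [pred i : mindex n | [forall s,
  if sigma (j s) is Some k then nat_of_ord (i k) == theta (j s) else false]].
  pose f t := if sigma (j t) is Some k then k else t.
  have sigma_f t : sigma (j t) = Some (f t).
    by have := forallP coord t; rewrite /f; case: (sigma (j t)).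
  have f_inj : injective f.
    move=> t u ftu; apply/eqP; apply: contraT => tu.
    by have := implyP (forallP (distinct t) u) tu; rewrite !sigma_f ftu eqxx.
  move=> _; exists (perm f_inj), i; apply/ffunP => t.
  rewrite ffunE permE; apply/val_inj => /=.
  have := forallP coord t; rewrite sigma_f => /eqP ->.
  by have /sigmaP := sigma_f t; rewrite /theta sigma_f; lia.
by rewrite big_pred0 ?eqxx.
Qed.

Lemma prod_sym_index (x : 'I_N -> R) s i :
  \prod_(t < r) x (sym_index s i t) = \prod_(k < r) block x k (i k).
Proof.
by rewrite [RHS](reindex_inj (@perm_inj _ s)); apply: eq_bigr => t _; rewrite ffunE.
Qed.

Lemma cform_symmetrant (A : mindex n -> R) (x : 'I_N -> R) :
  cform (symmetrant A) x = (r`!)%:R * multiform A (block x).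
Proof.
pose h (si : {perm 'I_r} * mindex n) := sym_index si.1 si.2.
transitivity (\sum_(j in h @: setT) symmetrant A j * \prod_(s < r) x (j s)).
  rewrite [RHS]big_mkcond; apply: eq_bigr => j _; case: ifP => // /negbT hj.
  have [->|/symmetrant_supp[s [i ji]]] := eqVneq (symmetrant A j) 0.
    by rewrite mul0r.
  by rewrite ji (imset_f h (in_setT (s, i))) in hj.
rewrite big_imset /=; last by move=> ? ? _ _; apply: sym_index_inj.
under eq_bigr => si _ do rewrite symmetrant_sym_index prod_sym_index.
rewrite (eq_bigl xpredT) => [|si]; last by rewrite in_setT.
rewrite -(pair_big xpredT xpredT (fun _ i => A i * \prod_k block x k (i k))) /=.
by rewrite sumr_const card_Sn mulr_natl.
Qed.

End SymmetrantForm.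

Section RealFacts.
Context {R : realType}.
Implicit Types (E : set R) (b t : R).

Lemma sup_ge0 E : (forall t, E t -> 0 <= t) -> 0 <= sup E.
Proof.
move=> E_ge0; have [[[t Et] ubE]|noSup] := pselect (has_sup E).
  exact: le_trans (E_ge0 _ Et) (ub_le_sup ubE Et).
by rewrite sup_out.
Qed.

Lemma sup_le_ge0 E b : (forall t, E t -> t <= b) -> 0 <= b -> sup E <= b.
Proof.
move=> Eb b_ge0; have [[E0 _]|noSup] := pselect (has_sup E).
  exact: ge_sup.
by rewrite sup_out.
Qed.

Lemma le_sup_ub E b t : (forall t, E t -> t <= b) -> E t -> t <= sup E.
Proof. by move=> Eb Et; apply: ub_le_sup => //; exists b. Qed.

Lemma normcE (w : R[i]) : `|w| = (Normc.normc w)%:C%C.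
Proof. by []. Qed.

Lemma normc_ge0 (w : R[i]) : 0 <= Normc.normc w.
Proof. by case: w => a b; rewrite /= sqrtr_ge0. Qed.

Lemma normc_real (a : R) : Normc.normc a%:C%C = `|a|.
Proof. by rewrite /= expr0n /= addr0 sqrtr_sqr. Qed.

Lemma conj_real (a : R) : Num.conj a%:C%C = a%:C%C.
Proof. exact: conjc_real. Qed.

End RealFacts.

Section PowerSums.
Context {R : realType} {p : R}.
Hypothesis p_gt0 : 0 < p.

Lemma powR_invK (S : R) : 0 <= S -> (S `^ p^-1) `^ p = S.
Proof. by move=> S_ge0; rewrite -powRrM mulVf ?gt_eqF // powRr1. Qed.

Lemma powR_inv_eq1 (S : R) : 0 <= S -> S `^ p^-1 = 1 -> S = 1.
Proof. by move=> S_ge0 S1; rewrite -(powR_invK _ S_ge0) S1 powR1. Qed.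

Lemma lpnorm_powR (I : finType) (x : I -> R) : lpnorm p x `^ p = \sum_i `|x i| `^ p.
Proof. by rewrite powR_invK // sumr_ge0 // => i _; rewrite powR_ge0. Qed.

Lemma sum_powR_lpnorm1 (I : finType) (x : I -> R) :
  lpnorm p x = 1 -> \sum_i `|x i| `^ p = 1.
Proof. by apply: powR_inv_eq1; rewrite sumr_ge0 // => i _; rewrite powR_ge0. Qed.

Lemma sum_powR_lpnormC1 (I : finType) (z : I -> R[i]) :
  lpnormC p z = 1 -> \sum_i Normc.normc (z i) `^ p = 1.
Proof. by apply: powR_inv_eq1; rewrite sumr_ge0 // => i _; rewrite powR_ge0. Qed.

Lemma lpnorm_eq0 (I : finType) (x : I -> R) : lpnorm p x = 0 -> forall i, x i = 0.
Proof.
move=> x0 i; have : \sum_i `|x i| `^ p = 0 by rewrite -lpnorm_powR x0 powR0 ?gt_eqF.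
move/psumr_eq0P => /(_ (fun i _ => powR_ge0 _ _) i isT).
by move/powR_eq0_eq0/normr0_eq0.
Qed.

Lemma powR_le1 (a : R) : 0 <= a -> a `^ p <= 1 -> a <= 1.
Proof.
move=> a_ge0 ap_le1; rewrite leNgt; apply/negP => a_gt1.
have : 1 `^ p < a `^ p.
  by apply: (gt0_ltr_powR p_gt0) => //; rewrite nnegrE ?ler01 // ltW.
by rewrite powR1 ltNge ap_le1.
Qed.

Lemma powRVl (t : R) : 0 < t -> t^-1 `^ p = (t `^ p)^-1.
Proof.
move=> t_gt0; have tp_neq0 : t `^ p != 0 by rewrite gt_eqF // powR_gt0.
apply: (mulIf tp_neq0).
by rewrite -powRM ?invr_ge0 ?ltW // mulVf ?gt_eqF // powR1 mulVf.
Qed.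

Lemma lpnormC_normalize (I : finType) (x : I -> R) : 0 < lpnorm p x ->
  lpnormC p (fun i => (x i / lpnorm p x)%:C%C) = 1.
Proof.
move=> x_gt0; have xinv_ge0 : 0 <= (lpnorm p x)^-1 by rewrite invr_ge0 ltW.
rewrite /lpnormC; under eq_bigr do
  rewrite normc_real normrM normfV (gtr0_norm x_gt0) powRM // powRVl //.
by rewrite -mulr_suml -lpnorm_powR mulfV ?powR1 // gt_eqF // powR_gt0.
Qed.

Lemma prod_powR (I : finType) (f : I -> R) : (forall i, 0 <= f i) ->
  \prod_i f i `^ p = (\prod_i f i) `^ p.
Proof.
move=> f_ge0; suff [] : 0 <= \prod_i f i /\ \prod_i f i `^ p = (\prod_i f i) `^ p by [].
apply: (big_ind2 (fun a b => 0 <= b /\ a = b `^ p)); first by rewrite powR1.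
  by move=> a1 b1 a2 b2 [b1_ge0 ->] [b2_ge0 ->]; rewrite mulr_ge0 // powRM.
by [].
Qed.

Lemma prod_le_sum_powR_le1 (r : nat) (t : 'I_r -> R) :
    (0 < r)%N -> (forall k, 0 <= t k) -> \sum_k t k `^ p <= 1 ->
  \prod_k t k * r%:R `^ (r%:R / p) <= 1.
Proof.
move=> r_gt0 t_ge0 sum_le1; have r_ge0 : 0 <= r%:R :> R := ler0n _ r.
have r_neq0 : r%:R != 0 :> R by rewrite pnatr_eq0 -lt0n.
have tp_ge0 k : 0 <= t k `^ p by exact: powR_ge0.
apply: powR_le1; first by rewrite mulr_ge0 ?prodr_ge0 ?powR_ge0.
rewrite powRM ?prodr_ge0 ?powR_ge0 // -prod_powR // -powRrM mulfVK ?gt_eqF //.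
rewrite powR_mulrn //.
have [AGM _] := leif_AGM (A := predT) (E := fun k => t k `^ p) (fun k _ => tp_ge0 k).
have sum_predT : \sum_(k in predT) t k `^ p = \sum_k t k `^ p by apply: eq_bigl.
have prod_predT : \prod_(k in predT) t k `^ p = \prod_k t k `^ p by apply: eq_bigl.
rewrite cardT size_enum_ord sum_predT prod_predT in AGM.
have mean_le : ((\sum_k t k `^ p) / r%:R) ^+ r <= r%:R^-1 ^+ r.
  apply: lerXn2r; rewrite ?nnegrE ?divr_ge0 ?sumr_ge0 ?invr_ge0 //.
  by rewrite -[leRHS]mul1r ler_pM2r // invr_gt0 lt0r r_neq0.
apply: le_trans (ler_wpM2r (exprn_ge0 r r_ge0) (le_trans AGM mean_le)) _.
by rewrite -exprMn mulVf ?expr1n.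
Qed.

End PowerSums.

Section SpectralNorm.
Context {R : realType} {r : nat} {n : 'I_r -> nat} (p : R).
Hypothesis p_gt0 : 0 < p.

Definition cmultiform (A : mindex n -> R) (z : forall k, 'I_(n k) -> R[i]) : R[i] :=
  \sum_(i : mindex n) (A i)%:C%C * \prod_(k < r) Num.conj (z k (i k)).

Definition spnorm_set (A : mindex n -> R) : set R :=
  [set t | exists z : forall k, 'I_(n k) -> R[i],
     (forall k, lpnormC p (z k) = 1) /\ t = Normc.normc (cmultiform A z)].

Lemma normc_cmultiform_le (A : mindex n -> R) z :
  Normc.normc (cmultiform A z)
    <= \sum_(i : mindex n) `|A i| * \prod_(k < r) Normc.normc (z k (i k)).
Proof.
rewrite -lecR -normcE rmorph_sum; apply: le_trans (ler_norm_sum _ _ _) _.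
apply: ler_sum => i _; rewrite normrM normr_prod rmorphM rmorph_prod /=.
by rewrite normcE normc_real; under eq_bigr do rewrite norm_conjC normcE.
Qed.

Lemma normc_le1_lpnormC1 (I : finType) (z : I -> R[i]) :
  lpnormC p z = 1 -> forall i, Normc.normc (z i) <= 1.
Proof.
move=> /(sum_powR_lpnormC1 p_gt0) sum1 i.
apply: (powR_le1 p_gt0); first exact: normc_ge0.
by rewrite -sum1 (bigD1 i) //= lerDl sumr_ge0 // => j _; rewrite powR_ge0.
Qed.

Lemma spnorm_set_bounded (A : mindex n -> R) t :
  spnorm_set A t -> 0 <= t <= \sum_(i : mindex n) `|A i|.
Proof.
move=> [z [z1 ->]]; rewrite normc_ge0 /=; apply: le_trans (normc_cmultiform_le A z) _.
apply: ler_sum => i _; rewrite -[leRHS]mulr1 ler_wpM2l //.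
by apply: prodr_ile1 => k _; rewrite normc_ge0 normc_le1_lpnormC1.
Qed.

Lemma spnorm_ge0 (A : mindex n -> R) : 0 <= spnorm p A.
Proof. by apply: sup_ge0 => t /spnorm_set_bounded /andP[]. Qed.

Lemma le_spnorm (A : mindex n -> R) t : spnorm_set A t -> t <= spnorm p A.
Proof.
move=> At; apply: (le_sup_ub _ (\sum_(i : mindex n) `|A i|) _ _ At).
by move=> s /spnorm_set_bounded /andP[].
Qed.

Lemma multiform_le_spnorm (A : mindex n -> R) (y : forall k, 'I_(n k) -> R) :
  `|multiform A y| <= spnorm p A * \prod_(k < r) lpnorm p (y k).
Proof.
have [[k /(lpnorm_eq0 p_gt0) yk0]|y_neq0] := pselect (exists k, lpnorm p (y k) = 0).
  rewrite /multiform big1 ?normr0 => [|i _]; last first.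
    by rewrite (bigD1 k) //= yk0 mul0r mulr0.
  by rewrite mulr_ge0 ?spnorm_ge0 // prodr_ge0 // => k' _; rewrite powR_ge0.
have y_gt0 k : 0 < lpnorm p (y k).
  by rewrite lt0r powR_ge0 andbT; apply/eqP => yk0; apply: y_neq0; exists k.
have prod_gt0 : 0 < \prod_(k < r) lpnorm p (y k) by rewrite prodr_gt0.
pose z k m := (y k m / lpnorm p (y k))%:C%C.
have : spnorm_set A (`|multiform A y| / \prod_(k < r) lpnorm p (y k)).
  exists z; split => [k|]; first exact: lpnormC_normalize.
  rewrite -(gtr0_norm prod_gt0) -normfV -normrM -normc_real; congr Normc.normc.
  rewrite /cmultiform /multiform mulr_suml rmorph_sum; apply: eq_bigr => i _.
  rewrite -mulrA rmorphM -prodf_div rmorph_prod; congr (_ * _).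
  by apply: eq_bigr => k _; rewrite conj_real.
by move/le_spnorm; rewrite ler_pdivrMr.
Qed.

End SpectralNorm.

Section SymmetrantNorm.
Context {R : realType} {r : nat} {n : 'I_r -> nat} (p : R).
Hypothesis p_gt0 : 0 < p.
Local Notation N := (ntot n).
Local Notation c := ((r`!)%:R / (r%:R `^ (r%:R / p)) : R).

Lemma sum_lpnorm_block_le (x : 'I_N -> R) :
  \sum_(k < r) lpnorm p (block x k) `^ p <= \sum_j `|x j| `^ p.
Proof.
pose f j := if sigma j is Some _ then `|x j| `^ p else 0.
have -> : \sum_(k < r) lpnorm p (block x k) `^ p = \sum_j f j.
  rewrite (sum_blocks _ f) => [|j jN]; last by rewrite /f jN.
  apply: eq_bigr => k _; rewrite lpnorm_powR //.
  by apply: eq_bigr => m _; rewrite /f sigma_block_index.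
by apply: ler_sum => j _; rewrite /f; case: (sigma j); rewrite ?powR_ge0.
Qed.

Definition spread (w : forall k, 'I_(n k) -> R) (j : 'I_N) : R :=
  if sigma j is Some k then oapp (w k) 0 (insub (theta j)) else 0.

Lemma spread_block_index w k m : spread w (block_index k m) = w k m.
Proof. by rewrite /spread sigma_block_index theta_block_index valK. Qed.

Lemma block_spread w : block (spread w) = w.
Proof.
by apply: functional_extensionality_dep => k; apply/funext => m; exact: spread_block_index.
Qed.

Lemma sum_powR_spread w :
  \sum_j `|spread w j| `^ p = \sum_(k < r) \sum_(m : 'I_(n k)) `|w k m| `^ p.
Proof.
rewrite (sum_blocks _ (fun j => `|spread w j| `^ p)) => [|j jN].
  by apply: eq_bigr => k _; apply: eq_bigr => m _; rewrite spread_block_index.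
by rewrite /spread jN normr0 powR0 ?gt_eqF.
Qed.

Lemma cform_symmetrant_le (A : mindex n -> R) (x : 'I_N -> R) :
  (0 < r)%N -> lpnorm p x = 1 -> `|cform (symmetrant A) x| <= c * spnorm p A.
Proof.
move=> r_gt0 x1; set rp := r%:R `^ (r%:R / p).
have rp_gt0 : 0 < rp by rewrite powR_gt0 // ltr0n.
rewrite cform_symmetrant normrM ger0_norm // -mulrA ler_wpM2l //.
apply: le_trans (multiform_le_spnorm p p_gt0 A (block x)) _.
rewrite mulrC ler_wpM2r ?spnorm_ge0 // -[leRHS]mul1r ler_pdivlMr //.
apply: prod_le_sum_powR_le1 => // [k|]; first exact: powR_ge0.
by apply: le_trans (sum_lpnorm_block_le x) _; rewrite (sum_powR_lpnorm1 p_gt0).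
Qed.

Lemma etaP_symmetrant_le (A : mindex n -> R) :
  (0 < r)%N -> etaP p (symmetrant A) <= c * spnorm p A.
Proof.
move=> r_gt0; apply: sup_le_ge0 => [t [x [x1 ->]]|].
  exact: cform_symmetrant_le.
by rewrite mulr_ge0 ?divr_ge0 ?powR_ge0 ?spnorm_ge0.
Qed.

Lemma cform_symmetrant_ge (A : mindex n -> R) t :
    (0 < r)%N -> (forall i, 0 <= A i) -> spnorm_set p A t ->
  exists2 x, lpnorm p x = 1 & c * t <= `|cform (symmetrant A) x|.
Proof.
move=> r_gt0 A_ge0 [z [z1 ->]].
have r_gt0R : 0 < r%:R :> R by rewrite ltr0n.
pose rho := r%:R `^ (- p^-1).
have rho_ge0 : 0 <= rho by exact: powR_ge0.
have rho_p : rho `^ p = r%:R^-1.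
  by rewrite -powRrM mulNr mulVf ?gt_eqF // powR_inv1 // ltW.
have rho_r : rho ^+ r = (r%:R `^ (r%:R / p))^-1.
  by rewrite -powR_mulrn // -powRrM -powRN mulNr mulrC.
pose w k m := Normc.normc (z k m).
exists (spread (fun k m => rho * w k m)).
  rewrite /lpnorm sum_powR_spread.
  under eq_bigr => k _ do under eq_bigr => m _ do
    rewrite normrM (ger0_norm rho_ge0) (ger0_norm (normc_ge0 _)) powRM ?normc_ge0 //.
  under eq_bigr => k _ do
    rewrite -mulr_sumr (sum_powR_lpnormC1 p_gt0 _ _ (z1 k)) mulr1 rho_p.
  by rewrite sumr_const card_ord -[_ *+ _]mulr_natl mulfV ?gt_eqF // powR1.
rewrite cform_symmetrant block_spread multiformZ rho_r mulrA ger0_norm; last first.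
  rewrite mulr_ge0 ?divr_ge0 ?powR_ge0 // sumr_ge0 // => i _.
  by rewrite mulr_ge0 // prodr_ge0 // => k _; rewrite normc_ge0.
rewrite ler_wpM2l ?divr_ge0 ?powR_ge0 //; apply: le_trans (normc_cmultiform_le A z) _.
by apply: ler_sum => i _; rewrite ger0_norm.
Qed.

Lemma le_etaP_symmetrant (A : mindex n -> R) :
  (0 < r)%N -> (forall i, 0 <= A i) -> c * spnorm p A <= etaP p (symmetrant A).
Proof.
move=> r_gt0 A_ge0.
have c_gt0 : 0 < c by rewrite divr_gt0 ?ltr0n ?fact_gt0 // powR_gt0 // ltr0n.
have eta_ge0 : 0 <= etaP p (symmetrant A) by apply: sup_ge0 => s [x [_ ->]].
rewrite mulrC -ler_pdivlMr //.
apply: sup_le_ge0 => [t At|]; last exact: divr_ge0 eta_ge0 (ltW c_gt0).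
have [x x1 ct_le] := cform_symmetrant_ge A t r_gt0 A_ge0 At.
rewrite ler_pdivlMr // mulrC; apply: le_trans ct_le _.
apply: (le_sup_ub _ (c * spnorm p A)); last by exists x.
by move=> s [y [y1 ->]]; exact: cform_symmetrant_le.
Qed.

End SymmetrantNorm.

Theorem theorem16 (R : realType) (r : nat) (n : 'I_r -> nat) (p : R)
    (hp : 1 < p) (hr : (0 < r)%N) (A : mindex n -> R) :
  etaP p (symmetrant A) <= (r`!)%:R / (r%:R `^ (r%:R / p)) * spnorm p A /\
  ((forall i, 0 <= A i) ->
     etaP p (symmetrant A) = (r`!)%:R / (r%:R `^ (r%:R / p)) * spnorm p A).
Proof.
have p_gt0 : 0 < p := lt_trans ltr01 hp.
split; first exact: etaP_symmetrant_le.
move=> A_ge0; apply/eqP; rewrite eq_le etaP_symmetrant_le //=.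
exact: le_etaP_symmetrant.
Qed.
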